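(* Let $p\in(0,1)$, $\varepsilon>0$, and let $\mathcal{C}\subseteq\mathbb{F}_2^{m\times n}$ be a fixed $\mathbb{F}_2$-linear rank metric code with $T_{\mathcal{C}}<1$ (so $S_{\mathcal{C}}<2$). Then $$\Pr_{Y\sim\mathbb{F}_2^{m\times n}}\left[S_{\mathcal{C}+\{0,Y\}}>1+2T_{\mathcal{C}}+T_{\mathcal{C}}^{1.5}\right]<T_{\mathcal{C}}^{0.5},$$ where $Y$ is uniform.
   Context: $\mathcal{B}_R(X,pn)=\{Z\in\mathbb{F}_2^{m\times n}:\mathrm{rank}(X-Z)\le pn\}$; $L_{\mathcal{C}}(X)=|\mathcal{B}_R(X,pn)\cap\mathcal{C}|$; $A_{\mathcal{C}}(X)=2^{\frac{\varepsilon}{1+\varepsilon}nL_{\mathcal{C}}(X)}$; $S_{\mathcal{C}}=\mathbb{E}_{X\sim\mathbb{F}_2^{m\times n}}[A_{\mathcal{C}}(X)]$ ($X$ uniform); $T_{\mathcal{C}}=S_{\mathcal{C}}-1$. $\mathcal{C}+\{0,Y\}=\mathcal{C}\cup(\mathcal{C}+Y)$. *)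

From Stdlib Require Import Reals.
From mathcomp Require Import all_boot all_order all_algebra.
Set Implicit Arguments. Unset Strict Implicit. Unset Printing Implicit Defensive.

Definition Rleb (a b : R) : bool := if Rle_dec a b then true else false.
Definition Rltb (a b : R) : bool := if Rlt_dec a b then true else false.

Notation mat m n := ('M['F_2]_(m, n)).

Definition is_linear_code (m n : nat) (C : {set mat m n}) : Prop :=
  (0%R : mat m n) \in C /\
  (forall x y, x \in C -> y \in C -> (x + y)%R \in C) /\
  (forall (a : 'F_2) x, x \in C -> (a *: x)%R \in C).

Definition Lc (m n : nat) (p : R) (C : {set mat m n}) (X : mat m n) : nat :=
  #|[set Z in C | Rleb (INR (\rank (X - Z)%R)) (Rmult p (INR n))]|.

Definition Ac (m n : nat) (p eps : R) (C : {set mat m n}) (X : mat m n) : R :=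
  Rpower 2 (Rmult (Rmult (Rdiv eps (Rplus 1 eps)) (INR n)) (INR (Lc p C X))).

Definition Sc (m n : nat) (p eps : R) (C : {set mat m n}) : R :=
  Rdiv (\big[Rplus/R0]_(X : mat m n) Ac p eps C X) (INR #|{: mat m n}|).

Definition Tc (m n : nat) (p eps : R) (C : {set mat m n}) : R :=
  Rminus (Sc p eps C) 1.

Definition add0Y (m n : nat) (C : {set mat m n}) (Y : mat m n) : {set mat m n} :=
  C :|: [set (Z + Y)%R | Z in C].

Definition PrY (m n : nat) (P : pred (mat m n)) : R :=
  Rdiv (INR #|[set Y | P Y]|) (INR #|{: mat m n}|).

(* Write A_C = 1 + h with h >= 0, so that the mean of h is T := T_C.  A ball
   around X meets C + {0, Y} = C u (C + Y) in at most L_C(X) + L_C(X + Y)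
   points, hence A_{C+{0,Y}}(X) <= A_C(X) A_C(X + Y) and
   S_{C+{0,Y}} <= 1 + 2T + W(Y) with W(Y) = E_X[h(X) h(X + Y)].  Averaging W
   over Y gives T^2, so by Markov's inequality W(Y) > T^1.5 has probability
   less than T^0.5.  Finally T > 0 because 0 \in C forces A_C(0) > 1. *)

From Stdlib Require Import Reals.
From mathcomp Require Import all_boot all_order all_algebra.
From mathcomp Require Import Rstruct ring lra.
Import Order.TTheory GRing.Theory Num.Theory.
Local Open Scope ring_scope.

Section ShiftedProducts.
Variables (R : rcfType) (V : finZmodType).
Implicit Types (h W : V -> R) (y : V).

Lemma sumr_shift (F : V -> R) y : \sum_x F (x + y) = \sum_x F x.
Proof. by rewrite [RHS](reindex_inj (addIr y)). Qed.

Lemma sum_autocorrelation h :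
  \sum_y \sum_x h x * h (x + y) = (\sum_x h x) ^+ 2.
Proof.
rewrite exchange_big expr2 mulr_suml /=; apply: eq_bigr => x _.
rewrite -mulr_sumr -(sumr_shift h x); congr (_ * _).
by apply: eq_bigr => y _; rewrite addrC.
Qed.

Lemma sum_shifted_product_add1 h y :
  \sum_x (h x + 1) * (h (x + y) + 1) =
  \sum_x h x * h (x + y) + 2 * \sum_x h x + #|V|%:R.
Proof.
under eq_bigr => x _ do rewrite mulrDl mulrDr !mulr1 mul1r.
by rewrite !big_split /= sumr_shift sumr_const; ring.
Qed.

Lemma markov_strict W (t : R) : (forall y, 0 <= W y) ->
  [set y | t < W y] != set0 -> #|[set y | t < W y]|%:R * t < \sum_y W y.
Proof.
move=> W0 /set0Pn[y0 Ey0].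
rewrite mulr_natl -sumr_const [X in _ < X](bigID (mem [set y | t < W y])) /=.
rewrite -[X in X < _]addr0; apply: ltr_leD; last by apply: sumr_ge0.
apply: ltr_sum; first by apply/hasP; exists y0; rewrite ?mem_index_enum.
by move=> y; rewrite inE.
Qed.

Lemma shifted_product_tail (f g : V -> R) (T : R) :
  (forall x, 1 <= f x) -> (exists x, 1 < f x) ->
  (forall y, g y <= (\sum_x f x * f (x + y)) / #|V|%:R) ->
  T = (\sum_x f x) / #|V|%:R - 1 ->
  #|[set y | 1 + 2 * T + T * Num.sqrt T < g y]|%:R / #|V|%:R < Num.sqrt T.
Proof.
move=> f_ge1 [x0 fx0_gt1] g_le T_def.
set M : R := #|V|%:R.
have M_gt0 : 0 < M by rewrite ltr0n; apply/card_gt0P; exists x0.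
pose h x := f x - 1.
have h_ge0 x : 0 <= h x by rewrite subr_ge0.
have fE x : f x = h x + 1 by rewrite subrK.
have sum_h : \sum_x h x = M * T.
  by rewrite T_def sumrB sumr_const -/M; field; rewrite gt_eqF.
have T_gt0 : 0 < T.
  rewrite -(pmulr_rgt0 _ M_gt0) -sum_h (bigD1 x0) //=.
  by rewrite ltr_pwDl ?subr_gt0 // sumr_ge0.
set s := Num.sqrt T.
have s_gt0 : 0 < s by rewrite sqrtr_gt0.
have T_sqr : T = s ^+ 2 by rewrite sqr_sqrtr // ltW.
pose W y := (\sum_x h x * h (x + y)) / M.
have tail_sub : [set y | 1 + 2 * T + T * s < g y] \subset [set y | T * s < W y].
  apply/subsetP => y; rewrite !inE => tail_y.
  have : g y <= W y + 2 * T + 1.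
    move: (g_le y); under eq_bigr => x _ do rewrite !fE.
    rewrite sum_shifted_product_add1 sum_h -/M => /le_trans; apply.
    by rewrite (_ : _ / M = W y + 2 * T + 1) // /W; field; rewrite gt_eqF.
  by move: tail_y; lra.
have sum_W : \sum_y W y = M * T ^+ 2.
  by rewrite -mulr_suml sum_autocorrelation sum_h; field; rewrite gt_eqF.
rewrite ltr_pdivrMr //; apply: le_lt_trans (_ : _ <= #|[set y | T * s < W y]|%:R) _.
  by rewrite ler_nat subset_leq_card.
case: (eqVneq [set y | T * s < W y] set0) => [-> | tail_W_n0].
  by rewrite cards0 mulr_gt0.
have W_ge0 y : 0 <= W y by rewrite divr_ge0 ?sumr_ge0 // => x _; rewrite mulr_ge0.
have := @markov_strict W (T * s) W_ge0 tail_W_n0.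
rewrite sum_W => markov; rewrite -(ltr_pM2r (mulr_gt0 T_gt0 s_gt0)).
by have -> : s * M * (T * s) = M * T ^+ 2 by rewrite T_sqr; ring.
Qed.
End ShiftedProducts.

Lemma oppmx_F2 {m n : nat} (A : mat m n) : - A = A.
Proof. by apply/matrixP => i j; rewrite mxE oppr_pchar2 // pchar_Fp. Qed.

Lemma Lc_add0Y_le (m n : nat) (p : R) (C : {set mat m n}) (X Y : mat m n) :
  (Lc p (add0Y C Y) X <= Lc p C X + Lc p C (X + Y))%N.
Proof.
rewrite /Lc.
set ball := fun X Z : mat m n => Rleb (INR (\rank (X - Z))) (Rmult p (INR n)).
set B := [set Z in C | ball X Z]; set BY := [set Z in C | ball (X + Y) Z].
have sub : [set Z in add0Y C Y | ball X Z] \subset B :|: [set Z + Y | Z in BY].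
  apply/subsetP => Z; rewrite !inE => /andP[].
  case/orP => [ZC | /imsetP[Z' Z'C ->]] ball_Z.
    by rewrite ZC ball_Z.
  apply/orP; right; apply/imsetP; exists Z' => //; rewrite inE Z'C /=.
  by rewrite /ball opprD (oppmx_F2 Y) addrA addrAC in ball_Z.
apply: (leq_trans (subset_leq_card sub)); apply: (leq_trans (leq_card_setU _ _).1).
by rewrite leq_add2l leq_imset_card.
Qed.

Lemma Lc_gt0_at0 (m n : nat) (p : R) (C : {set mat m n}) :
  0 <= p -> 0 \in C -> (0 < Lc p C 0)%N.
Proof.
move=> p_ge0 C0; apply/card_gt0P; exists 0; rewrite inE C0 subrr mxrank0 /=.
rewrite /Rleb; case: Rle_dec => // -[].
by apply: Rmult_le_pos; [apply/RleP | apply: pos_INR].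
Qed.

Lemma Rpower2_ge1 (x : R) : Rle 0 x -> Rle 1 (Rpower 2 x).
Proof.
move=> x_ge0; rewrite -[X in Rle X _](Rpower_O 2); last exact: Rlt_0_2.
by apply: Rle_Rpower => //; apply: Rlt_le; apply: Rlt_plus_1.
Qed.

Lemma Rpower2_gt1 (x : R) : Rlt 0 x -> Rlt 1 (Rpower 2 x).
Proof.
move=> x_gt0; rewrite -[X in Rlt X _](Rpower_O 2); last exact: Rlt_0_2.
by apply: Rpower_lt => //; apply: Rlt_plus_1.
Qed.

Section ListSizeWeight.
Variables (m n : nat) (p eps : R).
Hypotheses (n_gt0 : (0 < n)%N) (eps_gt0 : 0 < eps).

Let rate_gt0 : Rlt 0 (Rmult (Rdiv eps (Rplus 1 eps)) (INR n)).
Proof.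
have eps_pos : Rlt 0 eps by apply/RltP.
apply: Rmult_lt_0_compat; last exact/lt_0_INR/ssrnat.ltP.
by apply: Rdiv_lt_0_compat => //; apply: Rplus_lt_0_compat => //; apply: Rlt_0_1.
Qed.

Lemma Ac_ge1 (C : {set mat m n}) X : 1 <= Ac p eps C X.
Proof.
apply/RleP/Rpower2_ge1.
by apply: Rmult_le_pos; [apply: Rlt_le | apply: pos_INR].
Qed.

Lemma Ac_gt1 (C : {set mat m n}) X : (0 < Lc p C X)%N -> 1 < Ac p eps C X.
Proof.
move=> L_gt0; apply/RltP/Rpower2_gt1.
by apply: Rmult_lt_0_compat => //; apply/lt_0_INR/ssrnat.ltP.
Qed.

Lemma Ac_add0Y_le (C : {set mat m n}) X Y :
  Ac p eps (add0Y C Y) X <= Ac p eps C X * Ac p eps C (X + Y).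
Proof.
apply/RleP; rewrite /Ac -RmultE -Rpower_plus -Rmult_plus_distr_l -plus_INR.
apply: Rle_Rpower; first by apply: Rlt_le; apply: Rlt_plus_1.
apply: Rmult_le_compat_l; first exact: Rlt_le.
by apply: le_INR; apply/ssrnat.leP; apply: Lc_add0Y_le.
Qed.

Lemma Sc_add0Y_le (C : {set mat m n}) Y :
  Sc p eps (add0Y C Y) <=
  (\sum_X Ac p eps C X * Ac p eps C (X + Y)) / #|{: mat m n}|%:R.
Proof.
rewrite /Sc INRE ler_wpM2r ?invr_ge0 ?ler0n //.
by apply: ler_sum => X _; apply: Ac_add0Y_le.
Qed.
End ListSizeWeight.

Theorem lemma7 (m n : nat) (p eps : R) (C : {set mat m n}) :
  (0 < n)%N ->
  Rlt 0 p -> Rlt p 1 -> Rlt 0 eps ->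
  is_linear_code C ->
  Rlt (Tc p eps C) 1 ->
  Rlt (PrY (fun Y : mat m n =>
          Rltb (Rplus (Rplus 1 (Rmult 2 (Tc p eps C)))
                          (Rmult (Tc p eps C) (sqrt (Tc p eps C))))
                   (Sc p eps (add0Y C Y))))
      (sqrt (Tc p eps C)).
Proof.
move=> n_gt0 /RltP p_gt0 _ /RltP eps_gt0 [C0 _] _.
have Rltb_lt a b : Rltb a b = (a < b).
  by rewrite /Rltb; case: Rlt_dec => h; apply/esym; apply/RltP.
apply/RltP; rewrite /PrY !INRE RsqrtE.
under eq_finset => Y do rewrite Rltb_lt IZRposE INRE.
apply: (@shifted_product_tail _ _ (Ac p eps C)).
- exact: Ac_ge1.
- by exists 0; apply: Ac_gt1 => //; apply: Lc_gt0_at0 => //; apply: ltW.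
- exact: Sc_add0Y_le.
- by rewrite /Tc /Sc INRE.
Qed.
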